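(* For the model $\dot S=\Lambda-F_1(S,I_1)-F_2(S,I_2)-\lambda S$, $\dot V_1=rS-(\mu+kI_2)V_1$, $\dot I_1=F_1(S,I_1)-\alpha_1I_1$, $\dot I_2=F_2(S,I_2)+kI_2V_1-\alpha_2I_2$, the closed set $\Omega_1=\{(S,V_1,I_1,I_2)\in\Omega : S\le S^0,\ V_1\le V_1^0\}$ is positively invariant.
   Context: The state is $(S,V_1,I_1,I_2)\in\mathbb{R}^4_+$. The constants $\Lambda,\mu,r,k,\gamma_1,\gamma_2>0$ and $v_1,v_2\ge0$; $\lambda=r+\mu$ and $\alpha_i=\gamma_i+v_i+\mu$. For $i=1,2$ the incidence functions satisfy: (H1) $F_i(S,I_i)=I_if_i(S,I_i)$ with $F_i,f_i\in C^2(\mathbb{R}^2_+,\mathbb{R}_+)$ and $F_i(0,I_i)=F_i(S,0)=0$; (H2) $\partial f_i/\partial S>0$ and $\partial f_i/\partial I_i\le0$ on $\mathbb{R}^2_+$; (H3) $\lim_{I_i\to0^+}F_i(S,I_i)/I_i$ exists and is positive for $S>0$. Here $\Omega=\{(S,V_1,I_1,I_2)\in\mathbb{R}^4_+: S+V_1+I_1+I_2\le\Lambda/\mu\}$, $S^0=\Lambda/\lambda$ and $V_1^0=r\Lambda/(\mu\lambda)$. *)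

From Stdlib Require Import Reals.
From Coquelicot Require Import Coquelicot.
Open Scope R_scope.

Definition quad (s i : R) : Prop := 0 <= s /\ 0 <= i.

(* Hypotheses on one incidence function F_i = I_i f_i (paper: (H1)-(H3)).
   "F, f in C^2(R^2_+, R_+)" is rendered as: F, f are nonnegative on R^2_+
   and are restrictions to R^2_+ of functions GF, Gf that are C^2
   (Coquelicot's ex_diff_n _ 2) at every point of R^2_+.  The partial
   derivatives in (H2) are those of this C^2 extension (which on the
   boundary coincide with the one-sided derivatives of f). *)
Definition incidence_hyp (F f : R -> R -> R) : Prop :=
  (forall s i, quad s i -> 0 <= F s i /\ 0 <= f s i) /\
  (forall s i, quad s i -> F s i = i * f s i) /\
  (exists GF Gf : R -> R -> R,
      (forall s i, quad s i -> GF s i = F s i /\ Gf s i = f s i) /\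
      (forall s i, quad s i -> ex_diff_n GF 2 s i /\ ex_diff_n Gf 2 s i) /\
      (forall s i, quad s i ->
         Derive (fun z => Gf z i) s > 0 /\ Derive (fun z => Gf s z) i <= 0)) /\
  (forall i, 0 <= i -> F 0 i = 0) /\
  (forall s, 0 <= s -> F s 0 = 0) /\
  (forall s, 0 < s -> exists L, 0 < L /\
      filterlim (fun i => F s i / i) (at_right 0) (locally L)).

Definition is_solution (Lam mu r k g1 g2 v1 v2 : R) (F1 F2 : R -> R -> R)
  (T : R) (S V1 I1 I2 : R -> R) : Prop :=
  let lam := r + mu in
  let a1 := g1 + v1 + mu in
  let a2 := g2 + v2 + mu in
  (forall t, 0 <= t < T -> 0 <= S t /\ 0 <= V1 t /\ 0 <= I1 t /\ 0 <= I2 t) /\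
  filterlim S (at_right 0) (locally (S 0)) /\
  filterlim V1 (at_right 0) (locally (V1 0)) /\
  filterlim I1 (at_right 0) (locally (I1 0)) /\
  filterlim I2 (at_right 0) (locally (I2 0)) /\
  (forall t, 0 < t < T ->
     is_derive S t (Lam - F1 (S t) (I1 t) - F2 (S t) (I2 t) - lam * S t) /\
     is_derive V1 t (r * S t - (mu + k * I2 t) * V1 t) /\
     is_derive I1 t (F1 (S t) (I1 t) - a1 * I1 t) /\
     is_derive I2 t (F2 (S t) (I2 t) + k * I2 t * V1 t - a2 * I2 t)).

Definition Omega (Lam mu : R) (S V1 I1 I2 : R) : Prop :=
  0 <= S /\ 0 <= V1 /\ 0 <= I1 /\ 0 <= I2 /\ S + V1 + I1 + I2 <= Lam / mu.

Definition Omega1 (Lam mu r : R) (S V1 I1 I2 : R) : Prop :=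
  Omega Lam mu S V1 I1 I2 /\ S <= Lam / (r + mu) /\
  V1 <= r * Lam / (mu * (r + mu)).

From Stdlib Require Import Reals Lra Psatz.
From Coquelicot Require Import Coquelicot.
Open Scope R_scope.

(* Each of S, V1 and N = S + V1 + I1 + I2 satisfies a differential inequality
   u' <= a (c - u) with a >= 0, where c is the corresponding bound of Omega1:
   S' <= Lam - lam S because F_i >= 0, V1' <= r S^0 - mu V1 once S <= S^0 is
   known, and N' <= Lam - mu N.  For such u the function (u - c) e^(a t) is
   nonincreasing, so u(0) <= c forces u(t) <= c.  Nonnegativity of the state
   is part of the notion of solution. *)

Lemma filterlim_Rplus {T : Type} {F : (T -> Prop) -> Prop} {FF : Filter F}
  (f g : T -> R) (a b : R) :
  filterlim f F (locally a) -> filterlim g F (locally b) ->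
  filterlim (fun x => f x + g x) F (locally (a + b)).
Proof.
  intros Hf Hg.
  exact (filterlim_comp_2 f g Rplus Hf Hg
           (filterlim_plus (K := R_AbsRing) (V := R_NormedModule) a b)).
Qed.

Lemma le_right_limit (u : R -> R) (m l t : R) : 0 < t ->
  filterlim u (at_right 0) (locally l) ->
  (forall s, 0 < s < t -> m <= u s) -> m <= l.
Proof.
  intros Ht Hu Hm.
  apply (filterlim_le (F := at_right 0) (fun _ => m) u m l).
  - exists (mkposreal t Ht); intros s Hs Hs0; apply Hm; split; [exact Hs0|].
    unfold ball in Hs; simpl in Hs; unfold AbsRing_ball, abs, minus, plus, opp in Hs.
    simpl in Hs; rewrite Ropp_0, Rplus_0_r, Rabs_right in Hs; lra.
  - apply filterlim_const.
  - exact Hu.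
Qed.

Lemma nonincreasing_of_derive_nonpos (g dg : R -> R) (a b : R) :
  (forall x, a < x < b -> is_derive g x (dg x) /\ dg x <= 0) ->
  forall s t, a < s -> s <= t -> t < b -> g t <= g s.
Proof.
  intros Hg s t Has Hst Htb.
  destruct (MVT_gen g s t dg) as [x [Hx Hgap]];
    rewrite ?Rmin_left, ?Rmax_right in * by lra.
  - intros x Hx; apply Hg; lra.
  - intros x Hx; apply continuity_pt_filterlim, (ex_derive_continuous g).
    exists (dg x); apply Hg; lra.
  - destruct (Hg x ltac:(lra)) as [_ Hdg]. nra.
Qed.

Lemma is_derive_exp_weighted_gap (u : R -> R) (du a c x : R) :
  is_derive u x du ->
  is_derive (fun y => (u y - c) * exp (a * y)) x
            (exp (a * x) * (du + a * (u x - c))).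
Proof.
  intros Hu.
  assert (Hgap : is_derive (fun y => u y - c) x du).
  { replace du with (minus du 0) by (unfold minus, plus, opp; simpl; ring).
    exact (is_derive_minus u (fun _ => c) x du 0 Hu (is_derive_const c x)). }
  assert (Hexp : is_derive (fun y => exp (a * y)) x (a * exp (a * x))).
  { auto_derive; [exact I | ring]. }
  replace (exp (a * x) * (du + a * (u x - c)))
    with (plus (mult du (exp (a * x))) (mult (u x - c) (a * exp (a * x))))
    by (unfold plus, mult; simpl; ring).
  exact (is_derive_mult _ _ x _ _ Hgap Hexp (fun n m => Rmult_comm n m)).
Qed.

Lemma le_of_linear_differential_ineq (u du : R -> R) (a c T : R) : 0 <= a ->
  filterlim u (at_right 0) (locally (u 0)) -> u 0 <= c ->
  (forall t, 0 < t < T -> is_derive u t (du t) /\ du t <= a * (c - u t)) ->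
  forall t, 0 <= t < T -> u t <= c.
Proof.
  intros Ha Hright H0 Hu t Ht.
  destruct (Req_dec t 0) as [-> | Ht0]; [exact H0 |].
  apply Rnot_lt_le; intros Hc.
  assert (Hweighted : forall s, 0 < s < t ->
      (u t - c) * exp (a * t) <= (u s - c) * exp (a * s)).
  { intros s Hs.
    apply (nonincreasing_of_derive_nonpos (fun x => (u x - c) * exp (a * x))
             (fun x => exp (a * x) * (du x + a * (u x - c))) 0 T); try lra.
    intros x Hx; destruct (Hu x Hx) as [Hd Hle]; split.
    - exact (is_derive_exp_weighted_gap u (du x) a c x Hd).
    - pose proof (exp_pos (a * x)); nra. }
  (* since a >= 0, the weight only grows, so u stays above u t on (0, t) *)
  assert (Hbelow : forall s, 0 < s < t -> u t <= u s).
  { intros s Hs; pose proof (Hweighted s Hs).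
    assert (exp (a * s) <= exp (a * t)).
    { destruct (Req_dec (a * s) (a * t)) as [E | E].
      - rewrite E; lra.
      - apply Rlt_le, exp_increasing; nra. }
    pose proof (exp_pos (a * s)); nra. }
  pose proof (le_right_limit u (u t) (u 0) t ltac:(lra) Hright Hbelow); lra.
Qed.

Section SolutionBounds.

Variables (Lam mu r k g1 g2 v1 v2 : R) (F1 F2 : R -> R -> R) (T : R)
  (S V1 I1 I2 : R -> R).
Hypotheses (Hmu : 0 < mu) (Hr : 0 <= r) (Hk : 0 <= k)
  (Hg1 : 0 <= g1 + v1) (Hg2 : 0 <= g2 + v2).
Hypotheses (HF1 : forall s i, quad s i -> 0 <= F1 s i)
  (HF2 : forall s i, quad s i -> 0 <= F2 s i).
Hypothesis Hsol : is_solution Lam mu r k g1 g2 v1 v2 F1 F2 T S V1 I1 I2.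

Lemma solution_S_le : S 0 <= Lam / (r + mu) ->
  forall t, 0 <= t < T -> S t <= Lam / (r + mu).
Proof.
  destruct Hsol as [Hpos [HS [_ [_ [_ Hder]]]]]; intros HS0.
  apply (le_of_linear_differential_ineq S
           (fun t => Lam - F1 (S t) (I1 t) - F2 (S t) (I2 t) - (r + mu) * S t)
           (r + mu)); [lra | exact HS | exact HS0 |].
  intros t Ht; split; [apply Hder, Ht |].
  destruct (Hpos t ltac:(lra)) as [HSt [_ [HI1t HI2t]]].
  pose proof (HF1 (S t) (I1 t) (conj HSt HI1t)).
  pose proof (HF2 (S t) (I2 t) (conj HSt HI2t)).
  replace ((r + mu) * (Lam / (r + mu) - S t)) with (Lam - (r + mu) * S t)
    by (field; lra).
  lra.
Qed.

Lemma solution_V1_le : S 0 <= Lam / (r + mu) ->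
  V1 0 <= r * Lam / (mu * (r + mu)) ->
  forall t, 0 <= t < T -> V1 t <= r * Lam / (mu * (r + mu)).
Proof.
  intros HS0 HV0.
  pose proof (solution_S_le HS0) as HS.
  destruct Hsol as [Hpos [_ [HV [_ [_ Hder]]]]].
  apply (le_of_linear_differential_ineq V1
           (fun t => r * S t - (mu + k * I2 t) * V1 t) mu);
    [lra | exact HV | exact HV0 |].
  intros t Ht; split; [apply Hder, Ht |].
  destruct (Hpos t ltac:(lra)) as [_ [HV1t [_ HI2t]]].
  pose proof (HS t ltac:(lra)).
  replace (mu * (r * Lam / (mu * (r + mu)) - V1 t))
    with (r * (Lam / (r + mu)) - mu * V1 t) by (field; lra).
  assert (0 <= k * I2 t * V1 t) by (apply Rmult_le_pos; [apply Rmult_le_pos |]; lra).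
  nra.
Qed.

Lemma solution_total_le : S 0 + V1 0 + I1 0 + I2 0 <= Lam / mu ->
  forall t, 0 <= t < T -> S t + V1 t + I1 t + I2 t <= Lam / mu.
Proof.
  destruct Hsol as [Hpos [HS [HV [HI1 [HI2 Hder]]]]]; intros HN0.
  (* in the total derivative the infection terms F_i and k I2 V1 cancel *)
  apply (le_of_linear_differential_ineq (fun t => S t + V1 t + I1 t + I2 t)
           (fun t => Lam - mu * (S t + V1 t) - (g1 + v1 + mu) * I1 t
                     - (g2 + v2 + mu) * I2 t) mu);
    [lra | | exact HN0 |].
  { apply filterlim_Rplus; [apply filterlim_Rplus |]; [apply filterlim_Rplus | |];
      assumption. }
  intros t Ht; destruct (Hder t Ht) as [DS [DV [DI1 DI2]]]; split.
  - replace (Lam - mu * (S t + V1 t) - (g1 + v1 + mu) * I1 t - (g2 + v2 + mu) * I2 t)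
      with (plus (plus (plus
              (Lam - F1 (S t) (I1 t) - F2 (S t) (I2 t) - (r + mu) * S t)
              (r * S t - (mu + k * I2 t) * V1 t))
              (F1 (S t) (I1 t) - (g1 + v1 + mu) * I1 t))
              (F2 (S t) (I2 t) + k * I2 t * V1 t - (g2 + v2 + mu) * I2 t))
      by (unfold plus; simpl; ring).
    apply @is_derive_plus; [apply @is_derive_plus |]; [apply @is_derive_plus | |];
      assumption.
  - destruct (Hpos t ltac:(lra)) as [_ [_ [HI1t HI2t]]].
    replace (mu * (Lam / mu - (S t + V1 t + I1 t + I2 t)))
      with (Lam - mu * (S t + V1 t + I1 t + I2 t)) by (field; lra).
    nra.
Qed.

End SolutionBounds.

Lemma incidence_hyp_nonneg (F f : R -> R -> R) :
  incidence_hyp F f -> forall s i, quad s i -> 0 <= F s i.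
Proof. intros [Hnn _] s i Hq; exact (proj1 (Hnn s i Hq)). Qed.

Theorem mainTheorem3 (Lam mu r k g1 g2 v1 v2 : R) (F1 f1 F2 f2 : R -> R -> R) :
  0 < Lam -> 0 < mu -> 0 < r -> 0 < k -> 0 < g1 -> 0 < g2 ->
  0 <= v1 -> 0 <= v2 ->
  incidence_hyp F1 f1 -> incidence_hyp F2 f2 ->
  forall (T : R) (S V1 I1 I2 : R -> R),
    0 < T ->
    is_solution Lam mu r k g1 g2 v1 v2 F1 F2 T S V1 I1 I2 ->
    Omega1 Lam mu r (S 0) (V1 0) (I1 0) (I2 0) ->
    forall t, 0 <= t < T -> Omega1 Lam mu r (S t) (V1 t) (I1 t) (I2 t).
Proof.
  intros _ Hmu Hr Hk Hg1 Hg2 Hv1 Hv2 Hinc1 Hinc2 T S V1 I1 I2 _ Hsol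
    [[_ [_ [_ [_ HN0]]]] [HS0 HV0]] t Ht.
  pose proof (incidence_hyp_nonneg _ _ Hinc1) as HF1.
  pose proof (incidence_hyp_nonneg _ _ Hinc2) as HF2.
  destruct (proj1 Hsol t Ht) as [HSt [HV1t [HI1t HI2t]]].
  repeat split; try assumption.
  - apply (solution_total_le Lam mu r k g1 g2 v1 v2 F1 F2 T); auto; lra.
  - apply (solution_S_le Lam mu r k g1 g2 v1 v2 F1 F2 T S V1 I1 I2); auto; lra.
  - apply (solution_V1_le Lam mu r k g1 g2 v1 v2 F1 F2 T S V1 I1 I2); auto; lra.
Qed.
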